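(* Let $2\le d\leq 4$ and let $\rho$ be a diagonal symmetric (DS) state acting on $\mathbb{C}^d\otimes\mathbb{C}^d$. Then $\rho$ is separable if and only if $\rho$ is PPT (i.e. $\rho^{T_B}\succeq 0$).
   Context: Let $\{\ket{0},\dots,\ket{d-1}\}$ be the computational basis of $\mathbb{C}^d$. Define $\ket{D_{ii}}=\ket{ii}$ and, for $i<j$, $\ket{D_{ij}}=(\ket{ij}+\ket{ji})/\sqrt{2}$. A state $\rho$ on $\mathbb{C}^d\otimes\mathbb{C}^d$ is diagonal symmetric (DS) if $\rho=\sum_{0\le i\le j<d}p_{ij}\ket{D_{ij}}\bra{D_{ij}}$ with $p_{ij}\ge 0$ and $\sum_{i\le j}p_{ij}=1$. A state is separable if it is a convex combination of product states $\rho^A\otimes\rho^B$. The partial transpose $\rho^{T_B}$ is taken with respect to the computational basis of the second factor. *)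

From HB Require Import structures.
From mathcomp Require Import all_boot all_order all_algebra.
From mathcomp Require Import reals.
From mathcomp Require Import complex.
Set Implicit Arguments. Unset Strict Implicit. Unset Printing Implicit Defensive.
Import Order.TTheory GRing.Theory Num.Theory.
Local Open Scope ring_scope.

Section QDefs.
Variable R : realType.
Local Notation C := (R[i])%C.

Definition op (T : finType) := T -> T -> C.

Definition hermitian (T : finType) (A : op T) : Prop :=
  forall x y, A y x = (A x y)^*.

Definition psd (T : finType) (A : op T) : Prop :=
  hermitian A /\
  forall v : T -> C, 0 <= \sum_(x : T) \sum_(y : T) (v x)^* * A x y * v y.

Definition density (T : finType) (A : op T) : Prop :=
  psd A /\ \sum_(x : T) A x x = 1.

(* tensor product of operators on C^d and C^d, acting on C^d (x) C^d,
   the basis of which is indexed by pairs (i, j) ~ |ij> *)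
Definition tens (d : nat) (A B : op 'I_d) : op ('I_d * 'I_d)%type :=
  fun x y => A x.1 y.1 * B x.2 y.2.

Definition ptransB (d : nat) (rho : op ('I_d * 'I_d)%type) : op ('I_d * 'I_d)%type :=
  fun x y => rho (x.1, y.2) (y.1, x.2).

Definition separable (d : nat) (rho : op ('I_d * 'I_d)%type) : Prop :=
  exists (n : nat) (w : 'I_n -> R) (A B : 'I_n -> op 'I_d),
    [/\ (forall k, 0 <= w k), \sum_(k < n) w k = 1,
        (forall k, density (A k) /\ density (B k)) &
        forall x y, rho x y = \sum_(k < n) (w k)%:C%C * tens (A k) (B k) x y].

Definition PPT (d : nat) (rho : op ('I_d * 'I_d)%type) : Prop :=
  psd (ptransB rho).

Definition Dvec (d : nat) (i j : 'I_d) : 'I_d * 'I_d -> C :=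
  fun x => if i == j then (x == (i, i))%:R
           else ((x == (i, j))%:R + (x == (j, i))%:R) / sqrtC 2.

Definition proj (T : finType) (v : T -> C) : op T :=
  fun x y => v x * (v y)^*.

Definition DS (d : nat) (rho : op ('I_d * 'I_d)%type) : Prop :=
  exists p : 'I_d -> 'I_d -> R,
    [/\ (forall i j : 'I_d, (i <= j)%N -> 0 <= p i j),
        \sum_(i < d) \sum_(j < d | (i <= j)%N) p i j = 1 &
        forall x y, rho x y =
          \sum_(i < d) \sum_(j < d | (i <= j)%N) (p i j)%:C%C * proj (Dvec i j) x y].

End QDefs.

(* A DS state is determined by the symmetric entrywise nonnegative matrix M
   with M_ii = p_ii and M_ij = p_ij / 2, and on the span of the vectors |ss>
   its partial transpose acts as M; so a PPT DS state has M positive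
   semidefinite, i.e. doubly nonnegative.  For d <= 4 every doubly nonnegative
   matrix is completely positive, M = sum_k a_k a_k^T with a_k >= 0: at a
   vertex whose support neighbourhood is a clique a nonnegative rank-one term
   can be split off, and when no such vertex exists the support graph is a
   4-cycle, which is factored explicitly.  Each a a^T then gives a separable
   DS state: averaging |psi><psi| (x) |psi><psi| over the 4^d phase choices
   psi = sum_t sqrt(a_t) i^(th_t) |t> cancels every entry not of the form
   <x|.|x> or <x|.|swap x>.  Conversely, partial transposes of product states
   are positive, so separable states are PPT. *)

From HB Require Import structures.
From mathcomp Require Import all_boot all_order all_algebra.
From mathcomp Require Import reals complex spectral.
From mathcomp Require Import ring.
Import Order.TTheory GRing.Theory Num.Theory.
Local Open Scope ring_scope.
Set Implicit Arguments. Unset Strict Implicit. Unset Printing Implicit Defensive.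

Section QuadraticForms.
Variables (R : rcfType) (T : finType).
Implicit Types (M : T -> T -> R) (c : T -> R).

Definition qform M c := \sum_x \sum_y c x * M x y * c y.

Definition is_symmetric M := forall x y, M x y = M y x.
Definition is_nonneg M := forall x y, 0 <= M x y.
Definition is_psd M := forall c, 0 <= qform M c.
Definition is_dnn M := [/\ is_symmetric M, is_nonneg M & is_psd M].

Lemma sum_mul_delta (F : T -> R) i : \sum_y F y * (y == i)%:R = F i.
Proof.
rewrite (bigD1 i) //= eqxx mulr1 big1 ?addr0 // => y /negbTE ->; exact: mulr0.
Qed.

Lemma qform_delta M i : qform M (fun x => (x == i)%:R) = M i i.
Proof.
by rewrite /qform; under eq_bigr do rewrite sum_mul_delta mulrC; rewrite sum_mul_delta.
Qed.

Lemma qform_sub_rank1 M (a c : T -> R) :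
  qform (fun x y => M x y - a x * a y) c = qform M c - (\sum_x a x * c x) ^+ 2.
Proof.
rewrite /qform expr2 mulr_suml -sumrB; apply: eq_bigr => x _.
rewrite mulr_sumr -sumrB; apply: eq_bigr => y _; ring.
Qed.

Section Psd.
Variable M : T -> T -> R.
Hypotheses (symM : is_symmetric M) (psdM : is_psd M).

Lemma qform_shift c i lam :
  qform M (fun x => c x + lam * (x == i)%:R) =
  qform M c + 2 * lam * (\sum_y M i y * c y) + lam ^+ 2 * M i i.
Proof.
rewrite /qform.
have E x y : (c x + lam * (x == i)%:R) * M x y * (c y + lam * (y == i)%:R) =
  c x * M x y * c y + (lam * (c x * M x y)) * (y == i)%:R
  + (lam * (M x y * c y) + lam ^+ 2 * M x y * (y == i)%:R) * (x == i)%:R.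
  by ring.
under eq_bigr do under eq_bigr do rewrite E.
under eq_bigr do rewrite !big_split /= sum_mul_delta -mulr_suml.
rewrite !big_split /= sum_mul_delta big_split /= sum_mul_delta.
rewrite -mulr_sumr -[X in _ + (X + _)]mulr_sumr.
have -> : \sum_x c x * M x i = \sum_y M i y * c y.
  by apply: eq_bigr => y _; rewrite symM mulrC.
ring.
Qed.

Lemma psd_diag_ge0 i : 0 <= M i i.
Proof. by rewrite -qform_delta. Qed.

Lemma psd_schur_bound i c : 0 < M i i ->
  (\sum_y M i y * c y) ^+ 2 / M i i <= qform M c.
Proof.
move=> Mii_gt0; set S := \sum_y M i y * c y.
have := psdM (fun x => c x + (- (S / M i i)) * (x == i)%:R).
have -> : qform M (fun x => c x + (- (S / M i i)) * (x == i)%:R) =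
          qform M c - S ^+ 2 / M i i.
  by rewrite qform_shift -/S; field; rewrite gt_eqF.
by rewrite subr_ge0.
Qed.

Lemma psd_row_eq0 i j : M i i = 0 -> M i j = 0.
Proof.
move=> Mii0; apply/eqP; apply: contraT => Mij_neq0.
pose lam := - ((M j j + 1) / (2 * M i j)).
have := psdM (fun x => (x == j)%:R + lam * (x == i)%:R).
rewrite qform_shift qform_delta Mii0 mulr0 addr0 sum_mul_delta.
have -> : M j j + 2 * lam * M i j = -1 by rewrite /lam; field.
by rewrite ler0N1.
Qed.

Lemma psd_diag_gt0 i j : M i j != 0 -> 0 < M i i.
Proof.
move=> Mij; rewrite lt_def psd_diag_ge0 andbT; apply: contraNneq Mij => Mii0.
by rewrite psd_row_eq0 ?eqxx.
Qed.

End Psd.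
End QuadraticForms.

Section CompletelyPositive.
Variables (R : rcfType) (T : finType).
Implicit Types (M : T -> T -> R) (a : T -> R).

Definition is_cp M := exists n (a : 'I_n -> T -> R),
  (forall k x, 0 <= a k x) /\ forall x y, M x y = \sum_(k < n) a k x * a k y.

Lemma cp0 M : (forall x y, M x y = 0) -> is_cp M.
Proof. by move=> M0; exists 0%N, (fun _ _ => 0); split => // x y; rewrite big_ord0. Qed.

Lemma cp_add_rank1 M a : (forall x, 0 <= a x) ->
  is_cp (fun x y => M x y - a x * a y) -> is_cp M.
Proof.
move=> a_ge0 [n [b [b_ge0 Mb]]].
exists n.+1, (fun k => if unlift ord0 k is Some k' then b k' else a); split.
  by move=> k x; case: unliftP.
move=> x y; rewrite big_ord_recl /= unlift_none -(subrK (a x * a y) (M x y)) Mb addrC.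
by congr (_ + _); apply: eq_bigr => k _; rewrite liftK.
Qed.

Definition support M := [set p : T * T | M p.1 p.2 != 0].

Section Pivot.
Variables (M : T -> T -> R) (i : T).
Hypotheses (dnnM : is_dnn M) (Mii_gt0 : 0 < M i i).
Let pivot_vec t x := Num.sqrt (t / M i i) * M i x.

Lemma pivot_vec_mul t x y : 0 <= t ->
  pivot_vec t x * pivot_vec t y = t / M i i * (M i x * M i y).
Proof. by move=> t_ge0; rewrite mulrACA -expr2 sqr_sqrtr // divr_ge0 // ltW. Qed.

Lemma dnn_pivot_sub t : 0 <= t <= 1 ->
  (forall x y, t * (M i x * M i y) <= M i i * M x y) ->
  is_dnn (fun x y => M x y - pivot_vec t x * pivot_vec t y).
Proof.
case: dnnM => symM nnM psdM /andP[t_ge0 t_le1] t_le.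
have vv := pivot_vec_mul _ _ t_ge0; split.
- by move=> x y; rewrite symM !vv (mulrC (M i x)).
- move=> x y; rewrite vv subr_ge0 mulrAC ler_pdivrMr //.
  by rewrite (mulrC (M x y)).
- move=> c; rewrite qform_sub_rank1 subr_ge0.
  have -> : \sum_x pivot_vec t x * c x =
            Num.sqrt (t / M i i) * \sum_y M i y * c y.
    by rewrite mulr_sumr; apply: eq_bigr => x _; rewrite mulrA.
  rewrite exprMn sqr_sqrtr; last by rewrite divr_ge0 // ltW.
  apply: le_trans (psd_schur_bound symM psdM c Mii_gt0).
  set S := \sum_y M i y * c y.
  have -> : t / M i i * S ^+ 2 = t * (S ^+ 2 / M i i) by ring.
  by rewrite ler_piMl // divr_ge0 ?sqr_ge0 // ltW.
Qed.

Hypothesis clique : forall j k, 0 < M i j -> 0 < M i k -> 0 < M j k.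

Lemma pivot_step : exists a, [/\ (forall x, 0 <= a x),
  is_dnn (fun x y => M x y - a x * a y) &
  (#|support (fun x y => (M x y - a x * a y)%R)| < #|support M|)%N].
Proof.
case: dnnM => _ nnM _.
pose P p := (0 < M i p.1) && (0 < M i p.2).
pose ratio p := M i i * M p.1 p.2 / (M i p.1 * M i p.2).
have Pii : P (i, i) by rewrite /P Mii_gt0.
have Mi_prod0 p : ~~ P p -> M i p.1 * M i p.2 = 0.
  have Mi0 x : ~~ (0 < M i x) -> M i x = 0.
    by move=> Mix; apply/eqP; rewrite eq_le nnM andbT leNgt.
  by case/nandP => /Mi0 ->; rewrite ?mul0r ?mulr0.
(* the least ratio keeps [M - a a^T] nonnegative and makes its [p0] entry vanish *)
have [p0 /andP[Mip01 Mip02] ratio_min] := @arg_minP _ _ _ (i, i) P ratio Pii.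
set t := ratio p0 in ratio_min *.
have Mp0 : 0 < M p0.1 p0.2 by apply: clique.
have t_gt0 : 0 < t by rewrite /t /ratio !(divr_gt0, mulr_gt0).
have t_le1 : t <= 1.
  by apply: le_trans (ratio_min _ Pii) _; rewrite /ratio divff // gt_eqF ?mulr_gt0.
have t_le x y : t * (M i x * M i y) <= M i i * M x y.
  have [/andP[Mix Miy]|/Mi_prod0 /= ->] := boolP (P (x, y)); last first.
    by rewrite mulr0 mulr_ge0 // ltW.
  by rewrite -ler_pdivlMr ?mulr_gt0 // (ratio_min (x, y)) //= /P Mix.
have vv := pivot_vec_mul _ _ (ltW t_gt0).
exists (pivot_vec t); split.
- by move=> x; rewrite mulr_ge0 ?sqrtr_ge0.
- by apply: dnn_pivot_sub; rewrite ?(ltW t_gt0) ?t_le1.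
apply: proper_card; apply/properP; split.
  apply/subsetP => p; rewrite !inE vv; apply: contraNneq => Mp_eq0.
  have /Mi_prod0 -> : ~~ P p.
    by apply/negP => /andP[/clique Mp /Mp]; rewrite Mp_eq0 ltxx.
  by rewrite Mp_eq0 mulr0 subr0.
exists p0; rewrite !inE ?negbK; first by rewrite gt_eqF.
by rewrite vv /t /ratio; apply/eqP; field; rewrite !gt_eqF.
Qed.

End Pivot.
End CompletelyPositive.

Section FourCycleFactor.
Variable R : rcfType.

Lemma quad2_psd (al be ga : R) : 0 < ga ->
  (forall x y, 0 <= al * x ^+ 2 - 2 * ga * x * y + be * y ^+ 2) ->
  0 < al /\ ga ^+ 2 <= al * be.
Proof.
move=> ga_gt0 Q_ge0.
have al_gt0 : 0 < al.
  rewrite lt_def; have := Q_ge0 1 0.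
  rewrite expr1n expr0n /= !(mulr0, mulr1, subr0, addr0) => ->; rewrite andbT.
  apply/eqP => al0; have := Q_ge0 ((be + 1) / (2 * ga)) 1.
  have -> : al * ((be + 1) / (2 * ga)) ^+ 2 - 2 * ga * ((be + 1) / (2 * ga)) * 1
            + be * 1 ^+ 2 = -1 by rewrite al0; field; rewrite gt_eqF.
  by rewrite ler0N1.
split => //; have := Q_ge0 ga al.
have -> : al * ga ^+ 2 - 2 * ga * ga * al + be * al ^+ 2 = al * (al * be - ga ^+ 2)
  by ring.
by rewrite pmulr_rge0 // subr_ge0.
Qed.

Lemma c4_factor (mi ml mj mk a b c d : R) :
  0 < mi -> 0 < ml -> 0 < a -> 0 < b -> 0 < c -> 0 < d ->
  (forall x y, 0 <= (mj - a ^+ 2 / mi - c ^+ 2 / ml) * x ^+ 2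
                    - 2 * (a * b / mi + c * d / ml) * x * y
                    + (mk - b ^+ 2 / mi - d ^+ 2 / ml) * y ^+ 2) ->
  exists p1 q1 p2 q2 p3 q3 p4 q4 r : R,
   [/\ [/\ 0 <= p1, 0 <= q1, 0 <= p2, 0 <= q2 & 0 <= p3],
       [/\ 0 <= q3, 0 <= p4, 0 <= q4 & 0 <= r],
       [/\ p1 * q1 = a, p2 * q2 = b, p3 * q3 = c & p4 * q4 = d] &
       [/\ p1 ^+ 2 + p2 ^+ 2 = mi, p3 ^+ 2 + p4 ^+ 2 = ml, q1 ^+ 2 + q3 ^+ 2 = mj &
           q2 ^+ 2 + q4 ^+ 2 + r ^+ 2 = mk]].
Proof.
move=> mi_gt0 ml_gt0 a_gt0 b_gt0 c_gt0 d_gt0.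
set al := mj - _ - _; set be := mk - _ - _; set ga := _ + _ => Q_ge0.
have ga_gt0 : 0 < ga by rewrite addr_gt0 // divr_gt0 // mulr_gt0.
have [al_gt0 ga2_le] := quad2_psd ga_gt0 Q_ge0.
(* [ui] and [ul] split [mi] and [ml] so that the squares of the q's also add up
   to [mj]; what is left of [mk] is the Schur remainder [be - ga^2 / al]. *)
set ui := (a * ga + b * al) / mi; set ul := (c * ga + d * al) / ml.
have ui_num : 0 < a * ga + b * al by rewrite addr_gt0 // mulr_gt0.
have ul_num : 0 < c * ga + d * al by rewrite addr_gt0 // mulr_gt0.
have ui_gt0 : 0 < ui by rewrite divr_gt0.
have ul_gt0 : 0 < ul by rewrite divr_gt0.
have ga_num : a * b * ml + c * d * mi != 0 by rewrite gt_eqF // addr_gt0 // !mulr_gt0.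
have ne := (ga_num, gt_eqF ui_num, gt_eqF ul_num, gt_eqF ui_gt0, gt_eqF ul_gt0,
            gt_eqF ga_gt0, gt_eqF al_gt0, gt_eqF mi_gt0, gt_eqF ml_gt0).
have frac_gt0 (x y z : R) : 0 < x -> 0 < y -> 0 < z -> 0 < x * y / z.
  by move=> *; rewrite divr_gt0 // mulr_gt0.
have sqrt_mul (x y m : R) : 0 < x -> 0 < m -> x * y = m ^+ 2 ->
    Num.sqrt x * Num.sqrt y = m.
  by move=> x_gt0 m_gt0 xy; rewrite -sqrtrM ?ltW // xy sqrtr_sqr gtr0_norm.
exists (Num.sqrt (a * ga / ui)), (Num.sqrt (a * ui / ga)),
       (Num.sqrt (b * al / ui)), (Num.sqrt (b * ui / al)),
       (Num.sqrt (c * ga / ul)), (Num.sqrt (c * ul / ga)),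
       (Num.sqrt (d * al / ul)), (Num.sqrt (d * ul / al)),
       (Num.sqrt (be - ga ^+ 2 / al)).
have r2_ge0 : 0 <= be - ga ^+ 2 / al by rewrite subr_ge0 ler_pdivrMr // mulrC.
split; [by split; apply: sqrtr_ge0 | by split; apply: sqrtr_ge0 | | ].
  by split; apply: sqrt_mul; rewrite ?frac_gt0 //; field; rewrite ?ne.
rewrite !sqr_sqrtr //; try by apply/ltW/frac_gt0.
split.
- by rewrite /ui; field; rewrite ?ne.
- by rewrite /ul; field; rewrite ?ne.
- by rewrite /ui /ul /ga /al; field; rewrite ?ne.
- by rewrite /ui /ul /ga /be; field; rewrite ?ne.
Qed.

End FourCycleFactor.

Section FourCycleCP.
Variables (R : rcfType) (T : finType) (i j k l : T).
Hypotheses (ij : i != j) (ik : i != k) (il : i != l).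
Hypotheses (jk : j != k) (jl : j != l) (kl : k != l).
Hypothesis cover : forall x, [|| x == i, x == j, x == k | x == l].

Lemma sum4 (F : T -> R) : \sum_x F x = F i + F j + F k + F l.
Proof.
rewrite (bigD1 i) //= (bigD1 j) /=; last by rewrite eq_sym ij.
rewrite (bigD1 k) /=; last by rewrite eq_sym ik eq_sym jk.
rewrite (bigD1 l) /=; last by rewrite eq_sym il eq_sym jl eq_sym kl.
rewrite big1 ?addr0 ?addrA // => x /andP[/andP[/andP[xi xj] xk] xl].
by move: (cover x); rewrite (negbTE xi) (negbTE xj) (negbTE xk) (negbTE xl).
Qed.

Definition pair_vec (a b : T) (p q : R) : T -> R :=
  fun x => if x == a then p else if x == b then q else 0.

Lemma cp_four_cycle (M : T -> T -> R) : is_dnn M ->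
  0 < M i j -> 0 < M i k -> 0 < M l j -> 0 < M l k -> M j k = 0 -> M i l = 0 ->
  is_cp M.
Proof.
move=> [symM _ psdM] Mij Mik Mlj Mlk Mjk Mil.
have Mii := psd_diag_gt0 symM psdM (lt0r_neq0 Mij).
have Mll := psd_diag_gt0 symM psdM (lt0r_neq0 Mlj).
have E := (eqxx, negbTE ij, negbTE ik, negbTE il, negbTE jk, negbTE jl, negbTE kl,
  eq_sym j i, eq_sym k i, eq_sym l i, eq_sym k j, eq_sym l j, eq_sym l k).
have Msym := (symM j i, symM k i, symM j l, symM k l, symM l i, symM k j).
have [x y|p1 [q1 [p2 [q2 [p3 [q3 [p4 [q4 [r]]]]]]]]] :=
  c4_factor (mj := M j j) (mk := M k k) Mii Mll Mij Mik Mlj Mlk; last first.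
  move=> [[? ? ? ? ?] [? ? ? ?] [e1 e2 e3 e4] [f1 f2 f3 f4]].
  exists 5, (nth (fun=> 0) [:: pair_vec i j p1 q1; pair_vec i k p2 q2;
      pair_vec l j p3 q3; pair_vec l k p4 q4; pair_vec k k r 0]).
  split.
    by move=> [[|[|[|[|[|n]]]]] //= _] x; rewrite /pair_vec; repeat case: ifP.
  move=> x y; rewrite !big_ord_recr big_ord0 /= add0r /pair_vec.
  have := cover x; have := cover y.
  case/or4P => /eqP ->; case/or4P => /eqP ->; rewrite !E ?Msym ?Mjk ?Mil /=;
    rewrite ?(mulr0, mul0r, addr0, add0r);
    first [ rewrite -e1; ring | rewrite -e2; ring | rewrite -e3; ring
          | rewrite -e4; ring | rewrite -f1; ring | rewrite -f2; ring
          | rewrite -f3; ring | rewrite -f4; ring | by [] ].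
(* [v] minimises the form over the i- and l-coordinates for given x, y *)
pose v z := if z == i then - (M i j * x + M i k * y) / M i i
   else if z == j then x else if z == k then y
   else - (M l j * x + M l k * y) / M l l.
have := psdM v; rewrite /qform sum4 !sum4 /v !E /= !Msym Mjk Mil.
set lhs := (X in 0 <= X); set rhs := (X in _ -> 0 <= X).
suff -> : lhs = rhs by [].
by rewrite /lhs /rhs; field; rewrite !gt_eqF.
Qed.

End FourCycleCP.

Section SmallDnnCp.
Variables (R : rcfType) (T : finType).
Hypothesis card_T : (#|T| <= 4)%N.

Lemma not_five_distinct (x1 x2 x3 x4 x5 : T) :
  x1 != x2 -> x1 != x3 -> x1 != x4 -> x1 != x5 -> x2 != x3 -> x2 != x4 ->
  x2 != x5 -> x3 != x4 -> x3 != x5 -> x4 != x5 -> False.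
Proof.
move=> x12 x13 x14 x15 x23 x24 x25 x34 x35 x45.
have uniq5 : uniq [:: x1; x2; x3; x4; x5].
  by rewrite /= !inE !negb_or x12 x13 x14 x15 x23 x24 x25 x34 x35 x45.
have := max_card (mem [:: x1; x2; x3; x4; x5]).
by rewrite (card_uniqP uniq5) => /leq_trans /(_ card_T).
Qed.

Definition simplicial (M : T -> T -> R) i := (0 < M i i) &&
  [forall j, forall k, (0 < M i j) ==> (0 < M i k) ==> (0 < M j k)].

Section Neighbours.
Variable M : T -> T -> R.
Hypothesis dnnM : is_dnn M.

Lemma nonsimplicial_pair i : 0 < M i i -> ~~ simplicial M i ->
  exists j k, [/\ 0 < M i j, 0 < M i k & M j k = 0].
Proof.
case: dnnM => _ nnM _ Mii; rewrite /simplicial Mii negb_forall => /existsP[j].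
rewrite negb_forall => /existsP[k]; rewrite !negb_imply => /and3P[Mij Mik Mjk].
by exists j, k; split => //; apply/eqP; rewrite eq_le nnM andbT leNgt.
Qed.

Lemma outside_neighbour i j k a b : i != j -> i != k -> j != k -> M j k = 0 ->
  0 < M j a -> 0 < M j b -> M a b = 0 ->
  exists l, [/\ l != i, l != j, l != k, 0 < M j l & M i l = 0].
Proof.
case: dnnM => symM _ psdM ij ik jk Mjk Mja Mjb Mab.
have ja : j != a by apply: contraTneq Mjb => ->; rewrite Mab ltxx.
have jb : j != b by apply: contraTneq Mja => ->; rewrite symM Mab ltxx.
have ka : k != a by apply: contraTneq Mja => <-; rewrite Mjk ltxx.
have kb : k != b by apply: contraTneq Mjb => <-; rewrite Mjk ltxx.
have Maa : 0 < M a a.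
  by apply: (psd_diag_gt0 symM psdM (j := j)); rewrite symM lt0r_neq0.
have ab : a != b by apply: contraTneq Maa => eab; rewrite {2}eab Mab ltxx.
have [ai|ai] := eqVneq a i.
  by subst i; exists b; split; rewrite // eq_sym.
have [bi|bi] := eqVneq b i.
  by subst i; exists a; split; rewrite // 1?eq_sym // symM.
by exfalso; apply: (@not_five_distinct i j k a b) => //; rewrite eq_sym.
Qed.

Hypothesis no_simplicial : forall x, ~~ simplicial M x.

Lemma no_simplicial_four_cycle i : 0 < M i i ->
  exists j k l, [/\ [/\ i != j, i != k & i != l], [/\ j != k, j != l & k != l],
    (forall x, [|| x == i, x == j, x == k | x == l]),
    [/\ 0 < M i j, 0 < M i k, 0 < M l j & 0 < M l k] &
    M j k = 0 /\ M i l = 0].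
Proof.
case: (dnnM) => symM _ psdM Mii.
have [j [k [Mij Mik Mjk]]] := nonsimplicial_pair Mii (no_simplicial i).
have ij : i != j by apply: contraTneq Mik => ->; rewrite Mjk ltxx.
have ik : i != k by apply: contraTneq Mij => ->; rewrite symM Mjk ltxx.
have Mjj : 0 < M j j by apply: (psd_diag_gt0 symM psdM (j := i)); rewrite symM lt0r_neq0.
have Mkk : 0 < M k k by apply: (psd_diag_gt0 symM psdM (j := i)); rewrite symM lt0r_neq0.
have jk : j != k by apply: contraTneq Mjj => jk; rewrite {2}jk Mjk ltxx.
have [a [b [Mja Mjb Mab]]] := nonsimplicial_pair Mjj (no_simplicial j).
have [l [li lj lk Mjl Mil]] := outside_neighbour ij ik jk Mjk Mja Mjb Mab.
have [a' [b' [Mka' Mkb' Ma'b']]] := nonsimplicial_pair Mkk (no_simplicial k).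
have kj : k != j by rewrite eq_sym.
have Mkj : M k j = 0 by rewrite symM.
have [l' [l'i l'k l'j Mkl' Mil']] := outside_neighbour ik ij kj Mkj Mka' Mkb' Ma'b'.
have l'l : l' = l.
  apply/eqP; apply: contraT => l'l; exfalso.
  by apply: (@not_five_distinct i j k l l') => //; rewrite eq_sym.
subst l'.
have cover x : [|| x == i, x == j, x == k | x == l].
  apply: contraT; rewrite !negb_or => /and4P[xi xj xk xl]; exfalso.
  by apply: (@not_five_distinct i j k l x) => //; rewrite eq_sym.
exists j, k, l; split => //; first by rewrite ij ik eq_sym.
  by rewrite jk !(eq_sym _ l).
by split; rewrite // symM.
Qed.

End Neighbours.

Theorem dnn_cp (M : T -> T -> R) : is_dnn M -> is_cp M.
Proof.
have [n] := ubnP #|support M|; elim: n M => // n IH M /ltnSE supp_lt dnnM.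
have [/existsP[i /andP[Mii /forallP clique]] | /existsPn no_simplicial] :=
  boolP [exists i, simplicial M i].
  have [|a [a_ge0 dnn' supp']] := pivot_step dnnM Mii.
    by move=> j k Mij Mik; move: (clique j) => /forallP/(_ k); rewrite Mij Mik.
  exact/(cp_add_rank1 a_ge0)/IH/dnn'/(leq_trans supp').
case: (dnnM) => symM _ psdM.
have [/existsP[i Mii] | /existsPn diag0] := boolP [exists i, 0 < M i i].
  have [j [k [l [[ij ik il] [jk jl kl] cover [Mij Mik Mlj Mlk] [Mjk Mil]]]]] :=
    no_simplicial_four_cycle dnnM no_simplicial Mii.
  exact: (cp_four_cycle ij ik il jk jl kl cover dnnM Mij Mik Mlj Mlk Mjk Mil).
apply: cp0 => x y; apply: psd_row_eq0 => //; apply/eqP.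
by rewrite eq_le psd_diag_ge0 // andbT leNgt diag0.
Qed.

End SmallDnnCp.

Lemma conjC_real (R : realType) (r : R) : (r%:C%C)^* = r%:C%C :> R[i].
Proof. by apply: conj_Creal; rewrite complex_real. Qed.

Section Gram.
Variables (R : realType) (T : finType).
Local Notation C := R[i].

Lemma gram_qform (I : finType) (c : I -> C) (F : I -> T -> C) (K : op R T)
    (v : T -> C) :
  (forall x y, K x y = \sum_p c p * F p x * (F p y)^*) ->
  \sum_x \sum_y (v x)^* * K x y * v y =
  \sum_p c p * ((\sum_x (v x)^* * F p x) * (\sum_x (v x)^* * F p x)^*).
Proof.
move=> K_gram.
under eq_bigr => x _ do under eq_bigr => y _ do rewrite K_gram mulr_sumr mulr_suml.
under eq_bigr => x _ do rewrite exchange_big.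
rewrite exchange_big; apply: eq_bigr => p _.
rewrite rmorph_sum big_distrlr mulr_sumr; apply: eq_bigr => x _.
rewrite mulr_sumr; apply: eq_bigr => y _.
by rewrite /= [(_ * F p y)^*]rmorphM /= conjCK; ring.
Qed.

Lemma gram_psd (I : finType) (c : I -> C) (F : I -> T -> C) (K : op R T) :
  (forall p, 0 <= c p) ->
  (forall x y, K x y = \sum_p c p * F p x * (F p y)^*) -> psd K.
Proof.
move=> c_ge0 K_gram; split.
  move=> x y; rewrite !K_gram rmorph_sum; apply: eq_bigr => p _.
  by rewrite !rmorphM /= conjCK (conj_Creal (ger0_real (c_ge0 p))) mulrAC.
move=> v; rewrite (gram_qform v K_gram); apply: sumr_ge0 => p _.
by rewrite mulr_ge0 // mul_conjC_ge0.
Qed.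

Lemma psd_conic (I : finType) (w : I -> R) (K : I -> op R T) (L : op R T) :
  (forall k, 0 <= w k) -> (forall k, psd (K k)) ->
  (forall x y, L x y = \sum_k (w k)%:C%C * K k x y) -> psd L.
Proof.
move=> w_ge0 K_psd L_sum; split.
  move=> x y; rewrite !L_sum rmorph_sum; apply: eq_bigr => k _.
  by rewrite rmorphM /= (K_psd k).1 conjC_real.
move=> v; under eq_bigr do under eq_bigr do rewrite L_sum mulr_sumr mulr_suml.
under eq_bigr do rewrite exchange_big; rewrite exchange_big /=.
apply: sumr_ge0 => k _.
have -> : \sum_x \sum_y (v x)^* * ((w k)%:C%C * K k x y) * v y =
          (w k)%:C%C * \sum_x \sum_y (v x)^* * K k x y * v y.
  rewrite mulr_sumr; apply: eq_bigr => x _; rewrite mulr_sumr.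
  by apply: eq_bigr => y _; ring.
by rewrite mulr_ge0 ?ler0c ?(K_psd k).2.
Qed.

End Gram.

Section Spectral.
Variables (R : realType) (d : nat).
Local Notation C := R[i].

Lemma psd_spectral (B : op R 'I_d) : psd B ->
  exists (c : 'I_d -> C) (F : 'I_d -> 'I_d -> C),
    (forall m, 0 <= c m) /\ forall x y, B x y = \sum_m c m * F m x * (F m y)^*.
Proof.
move=> [hermB psdB]; pose A : 'M[C]_d := \matrix_(i, j) B i j.
have A_selfadjoint : (A ^t*)%sesqui = A.
  by apply/matrixP => i j; rewrite !mxE hermB conjCK.
have A_normal : A \is normalmx by apply/normalmxP; rewrite A_selfadjoint.
have := orthomx_spectralP A_normal.
rewrite invmx_unitary ?spectral_unitarymx //.
set P := spectralmx A; set c := spectral_diag A => A_diag.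
have P_orth a b : \sum_x P a x * (P b x)^* = (a == b)%:R.
  move/unitarymxP: (spectral_unitarymx A) => /matrixP /(_ a b); rewrite !mxE => <-.
  by apply: eq_bigr => x _; rewrite !mxE.
have B_gram x y : B x y = \sum_m c 0 m * (P m x)^* * (P m y)^*^*.
  transitivity (A x y); first by rewrite mxE.
  rewrite A_diag mul_mx_diag mxE; apply: eq_bigr => m _.
  by rewrite !mxE conjCK (mulrC (_^*)).
exists (c 0), (fun m x => (P m x)^*); split => // m0.
have := psdB (fun y => (P m0 y)^*); rewrite (gram_qform _ B_gram).
under eq_bigr => m _ do under eq_bigr => x _ do rewrite conjCK.
rewrite (bigD1 m0) //= P_orth eqxx conjC1 !mulr1 big1 ?addr0 // => m m_neq.
by rewrite P_orth eq_sym (negbTE m_neq) mul0r mulr0.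
Qed.

End Spectral.

Lemma psd_tens_transpose (R : realType) d (A B : op R 'I_d) : psd A -> psd B ->
  psd (fun x y : 'I_d * 'I_d => A x.1 y.1 * B y.2 x.2).
Proof.
move=> /psd_spectral[a [F [a_ge0 A_gram]]] /psd_spectral[b [G [b_ge0 B_gram]]].
apply: (@gram_psd _ _ _ (fun p => a p.1 * b p.2)
          (fun p x => F p.1 x.1 * (G p.2 x.2)^*)).
  by move=> p; rewrite mulr_ge0.
move=> x y; rewrite A_gram B_gram big_distrlr pair_bigA /=.
by apply: eq_bigr => p _; rewrite !rmorphM /= !conjCK; ring.
Qed.

Lemma separable_PPT (R : realType) d (rho : op R ('I_d * 'I_d)%type) :
  separable rho -> PPT rho.
Proof.
case=> n [w [A [B [w_ge0 _ AB_density rho_sum]]]].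
apply: (psd_conic (K := fun k => ptransB (tens (A k) (B k)))) w_ge0 _ _.
  by move=> k; apply: psd_tens_transpose; [exact: (AB_density k).1.1 | exact: (AB_density k).2.1].
by move=> x y; rewrite /ptransB rho_sum.
Qed.

Section DiagonalSymmetric.
Variables (R : realType) (d : nat).
Local Notation C := R[i].
Implicit Types (x y : 'I_d * 'I_d) (M : 'I_d -> 'I_d -> R).

Definition sort2 x : 'I_d * 'I_d := if (x.1 <= x.2)%N then x else (x.2, x.1).

Lemma sort2_le x : ((sort2 x).1 <= (sort2 x).2)%N.
Proof. by rewrite /sort2; case: (leqP x.1 x.2) => //= /ltnW. Qed.

Lemma sort2_swap x : sort2 (x.2, x.1) = sort2 x.
Proof.
case: x => [s t]; rewrite /sort2 /=; case: (ltngtP s t) => // st.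
by congr (_, _); apply: val_inj.
Qed.

Lemma sort2_eq x y : (sort2 y == sort2 x) = (y == x) || (y == (x.2, x.1)).
Proof.
have sort2P z : sort2 z = z \/ sort2 z = (z.2, z.1).
  by rewrite /sort2; case: ifP; [left | right].
apply/eqP/idP => [|/orP[/eqP -> | /eqP ->]]; rewrite ?sort2_swap //.
case: x y => [x1 x2] [y1 y2].
by case: (sort2P (y1, y2)) => ->; case: (sort2P (x1, x2)) => -> /= [-> ->];
  rewrite !eqxx ?orbT.
Qed.

Lemma Dvec_sort2 (i j : 'I_d) x : (i <= j)%N ->
  Dvec R i j x = (sort2 x == (i, j))%:R * (if i == j then 1 else (sqrtC 2)^-1).
Proof.
move=> ij; have sort_ij : sort2 (i, j) = (i, j) by rewrite /sort2 /= ij.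
rewrite /Dvec -sort_ij sort2_eq sort_ij /=.
have [<-|i_neq_j] := eqVneq i j; first by rewrite orbb mulr1.
rewrite -natrD; congr (_%:R * _).
have [->|] := eqVneq x (i, j); last by rewrite add0n.
by rewrite xpair_eqE (negbTE i_neq_j).
Qed.

Definition ds_mx (p : 'I_d -> 'I_d -> R) s t : R :=
  let x := sort2 (s, t) in if x.1 == x.2 then p x.1 x.2 else p x.1 x.2 / 2.

Definition ds_state M : op R ('I_d * 'I_d)%type :=
  fun x y => ((y == x) || (y == (x.2, x.1)))%:R * (M x.1 x.2)%:C%C.

Lemma half_sqrtC2 : (2^-1 : R)%:C%C = (sqrtC 2)^-1 * ((sqrtC 2)^*)^-1 :> C.
Proof.
rewrite fmorphV rmorph_nat /= conj_Creal ?ger0_real ?sqrtC_ge0 ?ler0n //.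
by rewrite -invfM -expr2 sqrtCK.
Qed.

Lemma DS_ds_state rho : DS rho -> exists p,
  [/\ forall i j : 'I_d, (i <= j)%N -> 0 <= p i j,
      \sum_(i < d) \sum_(j < d | (i <= j)%N) p i j = 1 &
      forall x y, rho x y = ds_state (ds_mx p) x y].
Proof.
case=> p [p_ge0 p_sum rho_eq]; exists p; split => // x y.
rewrite rho_eq pair_big_dep /= (bigD1 (sort2 x)) ?sort2_le //= big1 ?addr0.
  rewrite /proj !Dvec_sort2 ?sort2_le // -surjective_pairing eqxx sort2_eq.
  rewrite /ds_state /ds_mx -surjective_pairing.
  case: ifP => _; first by rewrite !mulr1 mul1r conjC_nat mulrC.
  rewrite mul1r rmorphM /= conjC_nat rmorphM /= fmorphV /= half_sqrtC2.
  ring.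
move=> q /andP[q_le q_neq]; rewrite /proj Dvec_sort2 // -surjective_pairing.
by rewrite eq_sym (negbTE q_neq) !mul0r mulr0.
Qed.

Lemma ds_mx_sym p : is_symmetric (ds_mx p).
Proof. by move=> s t; rewrite /ds_mx -[(t, s)]/(((s, t).2, (s, t).1)) sort2_swap. Qed.

Lemma ds_mx_ge0 p : (forall i j : 'I_d, (i <= j)%N -> 0 <= p i j) ->
  is_nonneg (ds_mx p).
Proof.
move=> p_ge0 s t; have := p_ge0 _ _ (sort2_le (s, t)).
by rewrite /ds_mx; case: ifP => // _ p_st; rewrite divr_ge0 ?ler0n.
Qed.

Lemma sum_symmetric_upper M : is_symmetric M ->
  \sum_(s < d) \sum_(t < d) M s t =
  \sum_(s < d) (M s s + \sum_(t < d | (s < t)%N) 2 * M s t).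
Proof.
move=> symM.
have lower_upper : \sum_(s < d) \sum_(t < d | (t < s)%N) M s t =
                   \sum_(s < d) \sum_(t < d | (s < t)%N) M s t.
  rewrite (exchange_big_dep xpredT) //=; apply: eq_bigr => s _.
  by apply: eq_bigr => t _; rewrite symM.
have split_row s : \sum_(t < d) M s t =
    M s s + \sum_(t < d | (s < t)%N) M s t + \sum_(t < d | (t < s)%N) M s t.
  rewrite (bigD1 s) //= -addrA; congr (_ + _).
  rewrite (bigID (fun t : 'I_d => (s < t)%N)) /=; congr (_ + _); apply: eq_bigl => t.
    by rewrite andb_idl // => st; rewrite -val_eqE gtn_eqF.
  by rewrite -leqNgt -val_eqE ltn_neqAle.
under eq_bigr do rewrite split_row.
rewrite big_split /= lower_upper -big_split /=; apply: eq_bigr => s _.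
rewrite -addrA -big_split /=; congr (_ + _).
by apply: eq_bigr => t _; rewrite mulr_natl mulr2n.
Qed.

Lemma ds_mx_sum p :
  \sum_s \sum_t ds_mx p s t = \sum_(i < d) \sum_(j < d | (i <= j)%N) p i j.
Proof.
rewrite sum_symmetric_upper; last exact: ds_mx_sym.
apply: eq_bigr => s _; rewrite [RHS](bigD1 s) ?leqnn //=; congr (_ + _).
  by rewrite /ds_mx /sort2 /= leqnn eqxx.
apply: eq_big => [t | t st]; first by rewrite ltn_neqAle -val_eqE eq_sym andbC.
rewrite /ds_mx /sort2 /= (ltnW st) -val_eqE ltn_eqF //=.
by rewrite mulrC divfK ?pnatr_eq0.
Qed.

Lemma ds_state_PPT M rho : (forall x y, rho x y = ds_state M x y) ->
  PPT rho -> is_psd M.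
Proof.
move=> rho_eq [_ PPT_form] c.
pose v (x : 'I_d * 'I_d) : C := if x.1 == x.2 then (c x.1)%:C%C else 0.
have sum_diag (F : 'I_d * 'I_d -> C) : (forall x, x.1 != x.2 -> F x = 0) ->
    \sum_x F x = \sum_s F (s, s).
  move=> F0; have -> : \sum_x F x = \sum_s \sum_t F (s, t).
    by rewrite pair_bigA; apply: eq_bigr => -[].
  apply: eq_bigr => s _.
  by rewrite (bigD1 s) //= big1 ?addr0 // => t ts; rewrite F0 //= eq_sym.
have form_eq : \sum_x \sum_y (v x)^* * ptransB rho x y * v y = (qform M c)%:C%C.
  rewrite (sum_diag (fun x => \sum_y (v x)^* * ptransB rho x y * v y)); last first.
    by move=> x x12; rewrite /v (negbTE x12) conjC0 big1 // => y _; rewrite !mul0r.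
  rewrite rmorph_sum; apply: eq_bigr => s _ /=.
  rewrite (sum_diag (fun y => (v (s, s))^* * ptransB rho (s, s) y * v y)); last first.
    by move=> y y12; rewrite /v (negbTE y12) mulr0.
  rewrite rmorph_sum; apply: eq_bigr => t _ /=.
  rewrite /v /= !eqxx /ptransB rho_eq /ds_state /= !eqxx orbT conjC_real.
  by rewrite !rmorphM /= mul1r.
by have := PPT_form v; rewrite form_eq ler0c.
Qed.

End DiagonalSymmetric.

Lemma separable_fin (R : realType) d (K : finType) (w : K -> R) (A B : K -> op R 'I_d)
    (rho : op R ('I_d * 'I_d)%type) :
  (forall k, 0 <= w k) -> \sum_k w k = 1 -> (forall k, density (A k) /\ density (B k)) ->
  (forall x y, rho x y = \sum_k (w k)%:C%C * tens (A k) (B k) x y) -> separable rho.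
Proof.
move=> w_ge0 w_sum AB_density rho_eq.
exists #|K|, (w \o enum_val), (A \o enum_val), (B \o enum_val); split => //=.
- by rewrite -big_enum_val -w_sum; apply: eq_bigl.
- move=> x y; rewrite rho_eq.
  by rewrite -(big_enum_val (fun k => (w k)%:C%C * tens (A k) (B k) x y)); apply: eq_bigl.
Qed.

Section PhaseAveraging.
Variable R : realType.
Local Notation C := R[i].

Definition phase (s : 'I_4) : C := 'i ^+ s.

Lemma phase_normC s : phase s * (phase s)^* = 1.
Proof. by rewrite /phase rmorphXn /= conjCi -exprMn mulrN -expr2 sqrCi opprK expr1n. Qed.

Lemma sum_pow_root4 (z : C) : z ^+ 4 = 1 -> z != 1 -> \sum_(s < 4) z ^+ s = 0.
Proof.
move=> z4 z_neq1.
have -> : \sum_(s < 4) z ^+ s = 1 + z + z ^+ 2 + z ^+ 3.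
  by rewrite !big_ord_recr big_ord0 /= add0r expr0 expr1.
have : (1 - z) * (1 + z + z ^+ 2 + z ^+ 3) == 0.
  by apply/eqP; transitivity (1 - z ^+ 4); [ring | rewrite z4 subrr].
by rewrite mulf_eq0 subr_eq0 eq_sym (negbTE z_neq1) => /eqP.
Qed.

Lemma sum_phase_pow (e1 e2 : nat) : (e1 <= 2)%N -> (e2 <= 2)%N ->
  \sum_(s < 4) phase s ^+ e1 * (phase s)^* ^+ e2 = (e1 == e2)%:R * 4.
Proof.
move=> e1_le2 e2_le2; set z : C := 'i ^+ e1 * (- 'i) ^+ e2.
have phase_z (s : 'I_4) : phase s ^+ e1 * (phase s)^* ^+ e2 = z ^+ s.
  by rewrite /phase rmorphXn /= conjCi -!exprM (mulnC s e1) (mulnC s e2) !exprM -exprMn.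
under eq_bigr do rewrite phase_z.
have [e12|e12] := eqVneq e1 e2.
  have -> : z = 1 by rewrite /z e12 -exprMn mulrN -expr2 sqrCi opprK expr1n.
  by rewrite mul1r; under eq_bigr do rewrite expr1n; rewrite sumr_const card_ord.
have sqr_mi : (- 'i : C) ^+ 2 = -1 by rewrite sqrrN sqrCi.
rewrite mul0r; apply: sum_pow_root4.
  have i4 : ('i : C) ^+ 4 = 1 by rewrite (exprM _ 2 2) sqrCi sqrrN expr1n.
  have mi4 : (- 'i : C) ^+ 4 = 1 by rewrite (exprM _ 2 2) sqr_mi sqrrN expr1n.
  by rewrite /z exprMn -!exprM (mulnC e1) (mulnC e2) !exprM i4 mi4 !expr1n mulr1.
have m1_neq1 : (-1 : C) != 1 by rewrite lt_eqF // (lt_trans (ltrN10 _) ltr01).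
have sqrt_m1_neq1 (w : C) : w ^+ 2 = -1 -> w != 1.
  by move=> w2; apply/eqP => w1; move: m1_neq1; rewrite -w2 w1 expr1n eqxx.
move: e1_le2 e2_le2 e12; rewrite /z; clear z phase_z.
case: e1 => [|[|[|]]] //; case: e2 => [|[|[|]]] // _ _ _;
  rewrite ?expr0 ?expr1 ?mul1r ?mulr1 ?sqr_mi ?sqrCi ?mulN1r ?mulrN1 ?opprK //;
  by apply: sqrt_m1_neq1; rewrite ?sqrCi ?sqr_mi.
Qed.

Section Averaging.
Variable d : nat.

Lemma pair_count_eq (x1 x2 y1 y2 : 'I_d) :
  [forall t, (t == x1) + (t == x2) == (t == y1) + (t == y2)]%N =
  ((y1, y2) == (x1, x2)) || ((y1, y2) == (x2, x1)).
Proof.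
apply/forallP/idP => [count_eq|/orP[] /eqP[-> ->] t //]; last by rewrite addnC.
move: (count_eq x1) (count_eq x2); rewrite !eqxx => cnt1 cnt2.
case: (eqVneq y1 x1) => [y1x1|y1x1].
  move: cnt2; rewrite y1x1 eqn_add2l; case: (eqVneq x2 y2) => [->|//].
  by rewrite !eqxx.
case: (eqVneq y2 x1) => [y2x1|y2x1].
  move: cnt2; rewrite y2x1 addnC eqn_add2r; case: (eqVneq x2 y1) => [->|//].
  by rewrite !eqxx orbT.
move: cnt1; rewrite (eq_sym x1 y1) (eq_sym x1 y2) (negbTE y1x1) (negbTE y2x1).
by case: (x1 == x2).
Qed.

Lemma prod_pow_eq (f : 'I_d -> C) (x : 'I_d) : \prod_t f t ^+ (t == x) = f x.
Proof.
by rewrite (bigD1 x) //= eqxx expr1 big1 ?mulr1 // => t /negbTE ->; rewrite expr0.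
Qed.

Lemma phase_average (x1 x2 y1 y2 : 'I_d) :
  \sum_(th : {ffun 'I_d -> 'I_4})
     phase (th x1) * (phase (th y1))^* * phase (th x2) * (phase (th y2))^* =
  (((y1, y2) == (x1, x2)) || ((y1, y2) == (x2, x1)))%:R * (4 ^ d)%:R.
Proof.
pose e1 t := ((t == x1) + (t == x2))%N; pose e2 t := ((t == y1) + (t == y2))%N.
have e_le2 (a b t : 'I_d) : ((t == a) + (t == b) <= 2)%N.
  by rewrite -[2%N]/(1 + 1)%N leq_add ?leq_b1.
have phase_prod (th : {ffun 'I_d -> 'I_4}) :
    phase (th x1) * (phase (th y1))^* * phase (th x2) * (phase (th y2))^* =
    \prod_t (phase (th t) ^+ e1 t * (phase (th t))^* ^+ e2 t).
  rewrite big_split /=; under eq_bigr do rewrite exprD.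
  rewrite big_split /= !prod_pow_eq.
  under [X in _ = _ * X]eq_bigr do rewrite exprD.
  by rewrite big_split /= !(prod_pow_eq (fun t => (phase (th t))^*)); ring.
under eq_bigr do rewrite phase_prod.
rewrite -(bigA_distr_bigA (fun t s => phase s ^+ e1 t * (phase s)^* ^+ e2 t)) /=.
under eq_bigr do rewrite sum_phase_pow ?e_le2 //.
rewrite -pair_count_eq.
case: (boolP [forall t, e1 t == e2 t]) => [/forallP e12 | /forallPn[t e12]].
  by under eq_bigr do rewrite e12 mul1r; rewrite prodr_const card_ord natrX mul1r.
by rewrite (bigD1 t) //= (negbTE e12) !mul0r.
Qed.

End Averaging.
End PhaseAveraging.

Section PureStates.
Variables (R : realType) (T : finType).
Local Notation C := R[i].

Lemma density_basis (i0 : T) : density (fun x y : T => (x == i0)%:R * (y == i0)%:R : C).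
Proof.
split.
  apply: (@gram_psd _ _ 'I_1 (fun=> 1) (fun _ x => (x == i0)%:R)) => // x y.
  by rewrite big_ord1 mul1r conjC_nat.
by rewrite (bigD1 i0) // big1 => [|x /negbTE ->]; rewrite ?mul0r //= eqxx mulr1 addr0.
Qed.

Lemma density_rank1 (v : T -> C) (N : R) : 0 < N ->
  \sum_t v t * (v t)^* = N%:C%C -> density (fun x y => v x * (v y)^* / N%:C%C).
Proof.
move=> N_gt0 v_norm; split.
  apply: (@gram_psd _ _ 'I_1 (fun=> (N^-1)%:C%C) (fun=> v)).
    by move=> _; rewrite ler0c invr_ge0 ltW.
  by move=> x y; rewrite big_ord1 fmorphV /= mulrC mulrA.
by rewrite -mulr_suml v_norm divff // fmorph_eq0 gt_eqF.
Qed.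

End PureStates.

Section PhaseVectors.
Variables (R : realType) (d : nat) (a : 'I_d -> R).
Hypothesis a_ge0 : forall t, 0 <= a t.
Local Notation C := R[i].

Definition phase_vec (th : {ffun 'I_d -> 'I_4}) t : C :=
  (Num.sqrt (a t))%:C%C * phase R (th t).

Lemma phase_vec_normC th t : phase_vec th t * (phase_vec th t)^* = (a t)%:C%C.
Proof.
rewrite /phase_vec rmorphM /= conjC_real mulrACA phase_normC mulr1.
by rewrite -rmorphM /= -expr2 sqr_sqrtr.
Qed.

Lemma phase_vec_average (x1 x2 y1 y2 : 'I_d) :
  \sum_th phase_vec th x1 * (phase_vec th y1)^* * phase_vec th x2 * (phase_vec th y2)^* =
  (((y1, y2) == (x1, x2)) || ((y1, y2) == (x2, x1)))%:R * (4 ^ d)%:R *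
  (a x1 * a x2)%:C%C.
Proof.
pose r t : C := (Num.sqrt (a t))%:C%C.
have rr t : r t * r t = (a t)%:C%C by rewrite -rmorphM /= -expr2 sqr_sqrtr.
transitivity (r x1 * r y1 * r x2 * r y2 * \sum_(th : {ffun 'I_d -> 'I_4})
    phase R (th x1) * (phase R (th y1))^* * phase R (th x2) * (phase R (th y2))^*).
  rewrite mulr_sumr; apply: eq_bigr => th _.
  by rewrite /phase_vec !rmorphM /= !conjC_real; ring.
rewrite phase_average; case: orP => [[] /eqP[-> ->] | _]; last by rewrite !mul0r mulr0.
  by rewrite rmorphM /= -!rr; ring.
by rewrite rmorphM /= -!rr; ring.
Qed.

Let N := \sum_t a t.

Definition phase_state th : op R 'I_d :=
  fun x y => phase_vec th x * (phase_vec th y)^* / N%:C%C.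

Lemma phase_state_density th : N != 0 -> density (phase_state th).
Proof.
move=> N_neq0; apply: density_rank1.
  by rewrite lt_def N_neq0 sumr_ge0.
by rewrite rmorph_sum; apply: eq_bigr => t _; rewrite phase_vec_normC.
Qed.

Lemma phase_state_average (x1 x2 y1 y2 : 'I_d) : N != 0 ->
  \sum_th (N ^+ 2 / (4 ^ d)%:R)%:C%C *
          tens (phase_state th) (phase_state th) (x1, x2) (y1, y2) =
  (((y1, y2) == (x1, x2)) || ((y1, y2) == (x2, x1)))%:R * (a x1 * a x2)%:C%C.
Proof.
move=> N_neq0; have D_neq0 : (4 ^ d)%:R != 0 :> C by rewrite pnatr_eq0 expn_eq0.
transitivity (\sum_th phase_vec th x1 * (phase_vec th y1)^* *
    phase_vec th x2 * (phase_vec th y2)^* / (4 ^ d)%:R); last first.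
  rewrite -mulr_suml phase_vec_average; field.
  by rewrite pnatr_eq0 expn_eq0.
apply: eq_bigr => th _; rewrite /phase_state /tens /=.
rewrite rmorphM rmorphXn fmorphV rmorph_nat /=; field.
by rewrite fmorph_eq0 N_neq0 D_neq0.
Qed.

End PhaseVectors.

Lemma cp_ds_separable (R : realType) d (M : 'I_d.+1 -> 'I_d.+1 -> R)
    (rho : op R ('I_d.+1 * 'I_d.+1)%type) :
  is_cp M -> \sum_s \sum_t M s t = 1 ->
  (forall x y, rho x y = ds_state M x y) -> separable rho.
Proof.
move=> [n [a [a_ge0 M_eq]]] M_sum rho_eq.
pose N k := \sum_t a k t.
pose D : R := (4 ^ d.+1)%:R.
pose w (q : 'I_n * {ffun 'I_d.+1 -> 'I_4}) := N q.1 ^+ 2 / D.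
(* when [a k] vanishes so does the weight [w (k, _)], and any state will do *)
pose A (q : 'I_n * {ffun 'I_d.+1 -> 'I_4}) : op R 'I_d.+1 :=
  if N q.1 == 0 then fun x y => (x == ord0)%:R * (y == ord0)%:R
  else phase_state (a q.1) q.2.
apply: (@separable_fin _ _ _ w A A).
- by move=> q; rewrite divr_ge0 ?sqr_ge0 ?ler0n.
- rewrite -(pair_bigA _ (fun k (th : {ffun 'I_d.+1 -> 'I_4}) => N k ^+ 2 / D)) /=.
  under eq_bigr do rewrite sumr_const card_ffun !card_ord -mulr_natr divfK
    ?pnatr_eq0 ?expn_eq0 // expr2 /N big_distrlr /=.
  rewrite -M_sum exchange_big; under eq_bigr do rewrite exchange_big.
  by apply: eq_bigr => s _; apply: eq_bigr => t _; rewrite M_eq.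
- move=> q; rewrite /A; case: ifP => [_ | /negbT N_neq0].
    by split; apply: density_basis.
  by split; apply: phase_state_density.
move=> [x1 x2] [y1 y2]; rewrite rho_eq /ds_state /= M_eq rmorph_sum mulr_sumr.
rewrite -(pair_bigA _ (fun k (th : {ffun 'I_d.+1 -> 'I_4}) =>
  (w (k, th))%:C%C * tens (A (k, th)) (A (k, th)) (x1, x2) (y1, y2))) /=.
apply: eq_bigr => k _; rewrite /A /w /=.
have [N0|N_neq0] := eqVneq (N k) 0; last exact/esym/phase_state_average.
have a0 t : a k t = 0 by move/psumr_eq0P: N0 => ->.
rewrite a0 mul0r rmorph0 mulr0 big1 // => th _.
by rewrite N0 expr0n /= mul0r rmorph0 mul0r.
Qed.

Theorem theorem3 (R : realType) (d : nat) (hd : (2 <= d <= 4)%N)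
    (rho : op R ('I_d * 'I_d)%type) :
  DS rho -> (separable rho <-> PPT rho).
Proof.
move=> /DS_ds_state[p [p_ge0 p_sum rho_eq]]; split; first exact: separable_PPT.
move=> rho_PPT; case: d hd p p_ge0 p_sum rho rho_eq rho_PPT => // d /andP[_ d_le4].
move=> p p_ge0 p_sum rho rho_eq rho_PPT.
have M_dnn : is_dnn (ds_mx p).
  by split; [exact: ds_mx_sym | exact: ds_mx_ge0 | exact: ds_state_PPT rho_eq rho_PPT].
apply: (cp_ds_separable _ _ rho_eq); last by rewrite ds_mx_sum.
by apply: dnn_cp; rewrite ?card_ord.
Qed.
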